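(* For every even $n\ge2$ and every alphabet $\Sigma$, $\mathsf{sumPI}(\mathrm{Col})\le2$.
   Context: The collision problem $\mathrm{Col}$ is the partial function on $S\subseteq\Sigma^n$ where $S$ consists of the positive inputs, $x=x_1\cdots x_n$ with all $x_i$ distinct ($\mathrm{Col}(x)=1$), and the negative inputs, $x$ such that for each $i$ there is exactly one $j\neq i$ with $x_i=x_j$ ($\mathrm{Col}(x)=0$). For $f:S\to\{0,1\}$, $S\subseteq\Sigma^n$, with $p=\{p_x:x\in S\}$ ranging over families of probability distributions on $[n]$, $$\mathsf{sumPI}(f)=\min_{p}\ \max_{x,y\in S:\ f(x)\neq f(y)} \frac{1}{\sum_{i:\,x_i\neq y_i}\sqrt{p_x(i)p_y(i)}}.$$ *)

From mathcomp Require Import all_boot all_order all_algebra.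
From mathcomp Require Import all_classical all_reals ereal.
Set Implicit Arguments. Unset Strict Implicit. Unset Printing Implicit Defensive.
Import Order.TTheory GRing.Theory Num.Theory.
Local Open Scope ring_scope.
Local Open Scope classical_set_scope.

Definition col_pos (Sigma : eqType) (n : nat) (x : 'I_n -> Sigma) : Prop :=
  forall i j : 'I_n, x i = x j -> i = j.

Definition col_neg (Sigma : eqType) (n : nat) (x : 'I_n -> Sigma) : Prop :=
  forall i : 'I_n, exists! j : 'I_n, j <> i /\ x i = x j.

(* Domain S of the partial function Col. *)
Definition col_dom (Sigma : eqType) (n : nat) (x : 'I_n -> Sigma) : Prop :=
  col_pos x \/ col_neg x.

(* Col x = 1 (true) on positive inputs, 0 (false) on negative ones. *)
Definition Col (Sigma : eqType) (n : nat) (x : 'I_n -> Sigma) : bool :=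
  [forall i : 'I_n, [forall j : 'I_n, (x i == x j) ==> (i == j)]].

Definition is_distr (R : realType) (n : nat) (q : 'I_n -> R) : Prop :=
  (forall i, 0 <= q i) /\ \sum_(i < n) q i = 1.

Definition inv_bar (R : realType) (s : R) : \bar R :=
  if s == 0 then +oo%E else (s^-1)%:E.

Definition sumPI_obj (R : realType) (Sigma : eqType) (n : nat)
    (S : ('I_n -> Sigma) -> Prop) (f : ('I_n -> Sigma) -> bool)
    (p : ('I_n -> Sigma) -> 'I_n -> R) : \bar R :=
  ereal_sup [set v | exists x y, [/\ S x, S y, f x != f y &
     v = inv_bar (\sum_(i < n | x i != y i) Num.sqrt (p x i * p y i))]].

Definition sumPI (R : realType) (Sigma : eqType) (n : nat)
    (S : ('I_n -> Sigma) -> Prop) (f : ('I_n -> Sigma) -> bool) : \bar R :=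
  ereal_inf [set sumPI_obj S f p | p in
     [set p : ('I_n -> Sigma) -> 'I_n -> R | forall x, S x -> is_distr (p x)]].

From mathcomp Require Import all_boot all_order all_algebra.
From mathcomp Require Import all_classical all_reals ereal.
Set Implicit Arguments. Unset Strict Implicit. Unset Printing Implicit Defensive.
Import Order.TTheory GRing.Theory Num.Theory.
Local Open Scope ring_scope.

(** The uniform adversary [p_x = 1/n] certifies [sumPI <= n/k] as soon as any
    two inputs with different values differ in at least [k] positions.  For
    [Col], pairing every position of a negative input [y] with its collision
    partner is a fixed-point-free involution, and it maps each position where a
    positive input [x] agrees with [y] to one where they differ (otherwise [x]
    would repeat a letter).  Hence [x] and [y] differ in at least [n/2]
    positions, and [sumPI(Col) <= 2]. *)

Lemma card_le_double_compl (T : finType) (A : {set T}) (f : T -> T) :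
  injective f -> {in A, forall i, f i \notin A} -> (#|T| <= #|~: A|.*2)%N.
Proof.
move=> f_inj fA; rewrite -(cardsC A) -addnn leq_add2r.
rewrite -(card_imset A f_inj); apply: subset_leq_card.
by apply/fintype.subsetP => _ /imsetP[i iA ->]; rewrite inE fA.
Qed.

Section CollisionPartner.

Variables (Sigma : eqType) (n : nat) (y : 'I_n -> Sigma).
Hypothesis y_neg : col_neg y.

Definition partner (i : 'I_n) : 'I_n :=
  odflt i [pick j | (j != i) && (y i == y j)].

Lemma partnerP i : partner i <> i /\ y i = y (partner i).
Proof.
rewrite /partner; case: pickP => [j /andP[/eqP ? /eqP ?] | none] //=.
have [j [[ji yij] _]] := y_neg i.
by have := none j; rewrite yij eqxx andbT => /eqP.
Qed.

Lemma partnerK : involutive partner.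
Proof.
move=> i; have [j [_ uniq_j]] := y_neg (partner i).
have [pi_neq pi_eq] := partnerP i.
have [ppi_neq ppi_eq] := partnerP (partner i).
rewrite -(uniq_j _ (conj ppi_neq ppi_eq)); apply: uniq_j.
by split; [move=> /esym | rewrite pi_eq].
Qed.

End CollisionPartner.

Lemma col_pos_neg_diff (Sigma : eqType) (n : nat) (x y : 'I_n -> Sigma) :
  col_pos x -> col_neg y -> (n <= #|[pred i | x i != y i]|.*2)%N.
Proof.
move=> x_pos y_neg.
have -> : #|[pred i | x i != y i]| = #|~: [set i | x i == y i]|.
  by apply: eq_card => i; rewrite !inE.
rewrite -[X in (X <= _)%N]card_ord.
apply: card_le_double_compl (can_inj (partnerK y_neg)) _ => i.
rewrite !inE => /eqP xy_i; apply/eqP => xy_pi.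
have [pi_neq pi_eq] := partnerP y_neg i.
by apply: pi_neq; apply: x_pos; rewrite xy_pi xy_i pi_eq.
Qed.

Lemma ColP (Sigma : eqType) (n : nat) (x : 'I_n -> Sigma) :
  reflect (col_pos x) (Col x).
Proof.
apply: (iffP forallP) => [h i j xij | x_pos i].
  by have /forallP/(_ j) := h i; rewrite xij eqxx => /eqP.
by apply/forallP => j; apply/implyP => /eqP/x_pos ->.
Qed.

Lemma col_dom_neg (Sigma : eqType) (n : nat) (x : 'I_n -> Sigma) :
  col_dom x -> ~~ Col x -> col_neg x.
Proof. by case=> // /ColP ->. Qed.

Lemma Col_diff (Sigma : eqType) (n : nat) (x y : 'I_n -> Sigma) :
  col_dom x -> col_dom y -> Col x != Col y ->
  (n <= #|[pred i | x i != y i]|.*2)%N.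
Proof.
move=> dx dy; case Ex: (Col x); case Ey: (Col y) => // _.
  by apply: col_pos_neg_diff; [apply/ColP | apply: col_dom_neg; rewrite ?Ey].
rewrite (eq_card (_ : _ =i [pred i | y i != x i])); last first.
  by move=> i; rewrite !inE eq_sym.
by apply: col_pos_neg_diff; [apply/ColP | apply: col_dom_neg; rewrite ?Ex].
Qed.

Section UniformAdversary.

Variables (R : realType) (Sigma : eqType) (n : nat).
Variables (S : ('I_n -> Sigma) -> Prop) (f : ('I_n -> Sigma) -> bool).
Hypothesis n_gt0 : (0 < n)%N.

Definition uniform_adv (_ : 'I_n -> Sigma) (_ : 'I_n) : R := n%:R^-1.

Lemma uniform_adv_distr x : is_distr (uniform_adv x).
Proof.
split=> [i | ]; first by rewrite invr_ge0 ler0n.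
by rewrite sumr_const card_ord -[_ *+ n]mulr_natr mulVf // pnatr_eq0 eqn0Ngt n_gt0.
Qed.

Lemma uniform_adv_pair x y (d := #|[pred i | x i != y i]|) : (0 < d)%N ->
  inv_bar (\sum_(i < n | x i != y i) Num.sqrt (uniform_adv x i * uniform_adv y i))
  = (n%:R / d%:R)%:E.
Proof.
move=> d_gt0.
have -> : \sum_(i < n | x i != y i) Num.sqrt (uniform_adv x i * uniform_adv y i)
    = d%:R / n%:R.
  rewrite (eq_bigr (fun _ => n%:R^-1)) => [|i _]; last first.
    by rewrite -expr2 sqrtr_sqr ger0_norm // invr_ge0 ler0n.
  by rewrite sumr_const mulr_natl.
rewrite /inv_bar mulf_eq0 invr_eq0 !pnatr_eq0 !eqn0Ngt d_gt0 n_gt0 /=.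
by rewrite invf_div.
Qed.

Lemma sumPI_le_uniform (k : nat) : (0 < k)%N ->
  (forall x y, S x -> S y -> f x != f y -> (k <= #|[pred i | x i != y i]|)%N) ->
  (sumPI R S f <= (n%:R / k%:R : R)%:E)%E.
Proof.
move=> k_gt0 far.
apply: (@le_trans _ _ (sumPI_obj S f uniform_adv)).
  by apply: ereal_inf_lbound; exists uniform_adv => // x _; apply: uniform_adv_distr.
apply: ge_ereal_sup => _ [x [y [Sx Sy fxy ->]]].
have k_le := far x y Sx Sy fxy.
rewrite uniform_adv_pair ?(leq_trans k_gt0) // lee_fin.
by rewrite ler_pM2l ?ltr0n // lef_pV2 ?posrE ?ltr0n ?ler_nat ?(leq_trans k_gt0).
Qed.

End UniformAdversary.

Theorem mainTheorem18 (R : realType) (Sigma : eqType) (n : nat) :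
  (2 <= n)%N -> ~~ odd n ->
  (@sumPI R Sigma n (@col_dom Sigma n) (@Col Sigma n) <= (2%:R)%:E)%E.
Proof.
move=> n_ge2 n_even.
have n_half : n = n./2.*2 by rewrite -[LHS]odd_double_half (negbTE n_even).
have half_gt0 : (0 < n./2)%N by rewrite -leq_double -n_half.
have n_gt0 : (0 < n)%N by rewrite (leq_trans _ n_ge2).
have far (x y : 'I_n -> Sigma) : col_dom x -> col_dom y -> Col x != Col y ->
    (n./2 <= #|[pred i | x i != y i]|)%N.
  by move=> dx dy /(Col_diff dx dy)/leqW; rewrite leq_half_double.
apply: le_trans (sumPI_le_uniform R n_gt0 half_gt0 far) _.
by rewrite {1}n_half -muln2 natrM mulrAC mulfV ?mul1r // pnatr_eq0 eqn0Ngt half_gt0.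
Qed.
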